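(* Let $p,q>1$ be relatively prime integers, and let $G_p$ and $G_q$ be as follows: for $n>1$, $G_n=\langle K,s\rangle\le\overline{K}$, where $K=B\times\langle f\rangle$ with $\langle f\rangle$ infinite cyclic, $B=\langle a,b,c,t\mid [a,b]=[a,c]=[b,c]=1,\ t^{-1}at=ab,\ t^{-1}bt=bc,\ t^{-1}ct=c\rangle$, and $s$ is the unique $n$-th root of $bf$ in $\overline{K}$. Write the corresponding generators of $G_q$ as $\alpha,\beta,\gamma,\tau,\phi,\sigma$ (so $\sigma^q=\beta\phi$). Let $D=G_p\times G_q$ and $T=\langle f\phi^{-1}\rangle$. Then $T$ is an infinite cyclic direct factor of $D$, i.e. $D=S\times T$ for some subgroup $S$, and $S\cong D/T$ is directly indecomposable. Consequently $D$ has the two decompositions $D=G_p\times G_q=S\times T$ into directly indecomposable factors, where $G_p$ and $G_q$ are nonabelian and indecomposable while $T\cong\mathbb{Z}$.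
   Context: The rational closure $\overline{K}$ of a finitely generated torsion-free nilpotent group $K$ is the torsion-free nilpotent group containing $K$ in which every element has a unique $n$-th root for each $n\ge1$ and every element has a positive power in $K$. *)

From HB Require Import structures.
From mathcomp Require Import all_boot all_order all_algebra.
Set Implicit Arguments. Unset Strict Implicit. Unset Printing Implicit Defensive.
Import Order.TTheory GRing.Theory Num.Theory.
Local Open Scope ring_scope.

Section GroupNotions.
Variables (T : Type) (mul : T -> T -> T) (inv : T -> T) (one : T).

Definition is_subgroup (H : T -> Prop) : Prop :=
  H one /\ (forall x y, H x -> H y -> H (mul x y)) /\ (forall x, H x -> H (inv x)).

Definition gen (A : T -> Prop) : T -> Prop :=
  fun x => forall H, is_subgroup H -> (forall y, A y -> H y) -> H x.

Definition gpow (x : T) (n : nat) : T := iter n (mul x) one.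

Definition internal_direct (G A B : T -> Prop) : Prop :=
  is_subgroup A /\ is_subgroup B /\
  (forall x, A x -> G x) /\ (forall x, B x -> G x) /\
  (forall x, A x -> B x -> x = one) /\
  (forall x y, A x -> B y -> mul x y = mul y x) /\
  (forall g, G g -> exists x y, A x /\ B y /\ g = mul x y).

Definition trivial_set (H : T -> Prop) : Prop := forall x, H x -> x = one.

Definition indecomposable (G : T -> Prop) : Prop :=
  ~ trivial_set G /\
  forall A B, internal_direct G A B -> trivial_set A \/ trivial_set B.

Definition abelian_set (G : T -> Prop) : Prop :=
  forall x y, G x -> G y -> mul x y = mul y x.

End GroupNotions.

(* An element (x, va, vb, vc, e) stands for t^x a^va b^vb c^vc f^e,
   all exponents rational. *)
Record elt := Elt { ex : rat; ea : rat; eb : rat; ec : rat; ef : rat }.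

(* action of t^y on Q^3 = <a,b,c>_Q by conjugation w |-> t^-y w t^y :
   phi^y = I + y N + y(y-1)/2 N^2, with N a = b, N b = c, N c = 0 *)
Definition phia (y va : rat) := va.
Definition phib (y va vb : rat) := vb + y * va.
Definition phic (y va vb vc : rat) := vc + y * vb + (y * (y - 1) / 2%:R) * va.

Definition kmul (g h : elt) : elt :=
  Elt (ex g + ex h)
      (phia (ex h) (ea g) + ea h)
      (phib (ex h) (ea g) (eb g) + eb h)
      (phic (ex h) (ea g) (eb g) (ec g) + ec h)
      (ef g + ef h).

Definition kinv (g : elt) : elt :=
  Elt (- ex g)
      (- phia (- ex g) (ea g))
      (- phib (- ex g) (ea g) (eb g))
      (- phic (- ex g) (ea g) (eb g) (ec g))
      (- ef g).

Definition kone : elt := Elt 0 0 0 0 0.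

Definition ga : elt := Elt 0 1 0 0 0.
Definition gb : elt := Elt 0 0 1 0 0.
Definition gc : elt := Elt 0 0 0 1 0.
Definition gt : elt := Elt 1 0 0 0 0.
Definition gf : elt := Elt 0 0 0 0 1.

Definition Kgrp : elt -> Prop :=
  gen kmul kinv kone (fun x => x = ga \/ x = gb \/ x = gc \/ x = gt \/ x = gf).

(* G_n = <K, s> with s the (unique) n-th root of bf in Kbar *)
Definition Ggrp (n : nat) : elt -> Prop :=
  gen kmul kinv kone
    (fun x => Kgrp x \/ gpow kmul kone x n = kmul gb gf).

Definition dmul (g h : elt * elt) : elt * elt := (kmul g.1 h.1, kmul g.2 h.2).
Definition dinv (g : elt * elt) : elt * elt := (kinv g.1, kinv g.2).
Definition done_ : elt * elt := (kone, kone).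

Definition Dgrp (p q : nat) : elt * elt -> Prop :=
  fun d => Ggrp p d.1 /\ Ggrp q d.2.

Definition tgen : elt * elt := (gf, kinv gf).
Definition Tgrp : elt * elt -> Prop := gen dmul dinv done_ (fun d => d = tgen).

(* Write the elements of Kbar as t^x a^a b^b c^c f^e with rational exponents;
   those with x = a = b = 0 are central.  Commutators with a and t push any
   non-central element of a factor A of a direct decomposition down to a
   nontrivial power of c inside A, and powers of c are commensurable, so two
   factors with trivial intersection cannot both be non-central.  If the factor
   B of G_n = A x B is central, then A contains b = [a, t], c^(1/n) = [s, t] and,
   since s^n = b f, an element c^(n u) f^(1 + n k) with n u, k integers; as
   1 + n k <> 0, a nonzero power of every central element of G_n lies in A, so
   B = 1.  For a complement S = A x B of T in G_p x G_q the same argument runs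
   coordinatewise, T absorbing one f-direction: a central factor is trivial, and
   if A and B cover different coordinates, the f-exponents of the elements
   obtained in A, B and T satisfy an integer relation with nonzero A-part,
   contradicting the uniqueness of decompositions in A x B x T.  A complement of
   T exists because u p + v q = 1 makes d |-> u p f_1 - v q f_2 a retraction of
   G_p x G_q onto T. *)

From HB Require Import structures.
From mathcomp Require Import all_boot all_order all_algebra.
From mathcomp Require Import ring.
From Stdlib Require Import Classical.
Set Implicit Arguments. Unset Strict Implicit. Unset Printing Implicit Defensive.
Import Order.TTheory GRing.Theory Num.Theory.

Local Notation subgroup := (is_subgroup *%g monoid.inv 1%g).
Local Notation generated := (gen *%g monoid.inv 1%g).
Local Notation direct := (internal_direct *%g monoid.inv 1%g).
Local Notation trivial := (trivial_set 1%g).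
Local Notation central x := (forall y, commute x y).

Section Subgroups.
Local Open Scope group_scope.
Variable G : groupType.
Implicit Types (H A : G -> Prop) (x y z : G).

Lemma group1 H : subgroup H -> H 1.
Proof. by case. Qed.

Lemma groupM H x y : subgroup H -> H x -> H y -> H (x * y).
Proof. by case=> _ [+ _]; apply. Qed.

Lemma groupV H x : subgroup H -> H x -> H x^-1.
Proof. by case=> _ [_]; apply. Qed.

Lemma groupX H x n : subgroup H -> H x -> H (x ^+ n).
Proof.
move=> sH Hx; elim: n => [|n IHn]; first exact: group1.
by rewrite expgS; apply: groupM.
Qed.

Lemma groupR H x y : subgroup H -> H x -> H y -> H [~ x, y].
Proof. by move=> sH Hx Hy; do !apply: groupM => //; apply: groupV. Qed.

Lemma gen_subgroup A : subgroup (generated A).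
Proof.
split; first by move=> H [].
split=> [x y Ax Ay H sH AH | x Ax H sH AH]; first by apply: groupM; [|apply: Ax|apply: Ay].
by apply: groupV; last apply: Ax.
Qed.

Lemma mem_gen A x : A x -> generated A x.
Proof. by move=> Ax H _; apply. Qed.

Lemma gen_minimal A H : subgroup H -> (forall x, A x -> H x) ->
  forall x, generated A x -> H x.
Proof. by move=> sH AH x; apply. Qed.

Lemma gpowE x n : gpow *%g 1 x n = x ^+ n.
Proof. exact: iter_mulg_1. Qed.

Lemma group_morph_int H (phi : rat -> G) :
  subgroup H -> {morph phi : r s / (r + s)%R >-> r * s} -> H (phi 1%R) ->
  forall k, k \is a Num.int -> H (phi k).
Proof.
move=> sH phiD H1 k /intrP[m ->].
have phi0 : phi 0%R = 1 by apply: (mulIg (phi 0%R)); rewrite -phiD addr0 mul1g.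
have Hnat n : H (phi n%:R%R).
  elim: n => [|n IHn]; first by rewrite phi0; apply: group1.
  by rewrite -addn1 natrD phiD; apply: groupM.
case: m => n; first exact: Hnat.
rewrite NegzE -[phi _]invgK; apply: groupV => //.
have -> : (phi (- (n.+1)%:R)%R)^-1 = phi n.+1%:R%R.
  by apply: mulg1_eq; rewrite -phiD addNr.
exact: Hnat.
Qed.

Lemma commgMr_commute x y z : commute y z -> commute y x -> [~ z, x * y] = [~ z, x].
Proof.
move=> cyz cyx; rewrite !commgEl conjgM; congr (_ * _).
apply/conjg_fixP/commgP/commute_sym.
by apply: commuteM; [apply: commuteV | apply: commuteM].
Qed.

Lemma commg_central x y c d : central c -> central d -> [~ x * c, y * d] = [~ x, y].
Proof.
move=> cc cd; rewrite commgMr_commute // -invgR commgMr_commute ?invgR //.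
Qed.

Lemma groupR_central H x y c d : subgroup H -> central c -> central d ->
  H (x * c) -> H (y * d) -> H [~ x, y].
Proof. by move=> sH cc cd Hx Hy; rewrite -(commg_central x y cc cd); apply: groupR. Qed.

End Subgroups.

Lemma not_trivial (T : Type) (one : T) (A : T -> Prop) :
  ~ trivial_set one A -> exists2 x, A x & x <> one.
Proof.
move=> A_ntriv; apply: NNPP => nx; apply: A_ntriv => x Ax.
by apply: NNPP => x1; apply: nx; exists x.
Qed.

Definition commg_closed (G : groupType) (X A : G -> Prop) :=
  forall z g, A z -> X g -> A [~ z, g]%g.

Section DirectProduct.
Local Open Scope group_scope.
Variables (G : groupType) (X A B : G -> Prop).
Hypothesis dXAB : direct X A B.

Lemma direct_sym : direct X B A.
Proof.
case: dXAB => sA [sB [AX [BX [AB1 [cAB dX]]]]].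
do 4 split=> //; split=> [x Bx Ax | ]; first exact: AB1.
split=> [x y Bx Ay | g /dX[x [y [Ax [By ->]]]]]; first exact/esym/cAB.
by exists y, x; rewrite cAB.
Qed.

Lemma direct_uniq x1 y1 x2 y2 : A x1 -> B y1 -> A x2 -> B y2 ->
  x1 * y1 = x2 * y2 -> x1 = x2 /\ y1 = y2.
Proof.
case: dXAB => sA [sB [_ [_ [AB1 _]]]] Ax1 By1 Ax2 By2 e.
have e21 : x2^-1 * x1 = y2 * y1^-1 by rewrite -[x1](mulgK y1) e mulgA mulKg.
have x21 : x2^-1 * x1 = 1.
  apply: AB1; first by apply: groupM => //; apply: groupV.
  by rewrite e21; apply: groupM => //; apply: groupV.
have ex : x1 = x2 by rewrite -[x1](mulVKg x2) x21 mulg1.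
by split=> //; apply: (mulgI x1); rewrite e ex.
Qed.

Lemma direct_commg : commg_closed X A.
Proof.
case: dXAB => sA [_ [_ [_ [_ [cAB dX]]]]] z g Az /dX[x [y [Ax [By ->]]]].
rewrite commgMr_commute; first exact: groupR.
- exact/esym/cAB.
- exact/esym/cAB.
Qed.

End DirectProduct.

Lemma direct_commg_closed_lift (G : groupType) (X S T A : G -> Prop) :
  direct X S T -> (forall a, A a -> S a) -> commg_closed S A -> commg_closed X A.
Proof.
case=> _ [_ [_ [_ [_ [cST dX]]]]] AS clA z g Az /dX[s [t [Ss [Tt ->]]]].
rewrite commgMr_commute; first exact: clA.
- by apply/esym/cST => //; apply: AS.
- exact/esym/cST.
Qed.

Local Open Scope ring_scope.

Definition elt_tuple (g : elt) := (ex g, ea g, eb g, ec g, ef g).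
Definition tuple_elt (v : rat * rat * rat * rat * rat) :=
  let: (x, a, b, c, e) := v in Elt x a b c e.
Lemma elt_tupleK : cancel elt_tuple tuple_elt. Proof. by case. Qed.
HB.instance Definition _ := Choice.copy elt (can_type elt_tupleK).

Lemma elt_ext (g h : elt) :
  ex g = ex h -> ea g = ea h -> eb g = eb h -> ec g = ec h -> ef g = ef h -> g = h.
Proof. by case: g h => ? ? ? ? ? [? ? ? ? ?] /= -> -> -> -> ->. Qed.

Lemma natr_neq0 (n : nat) : (0 < n)%N -> n%:R != 0 :> rat.
Proof. by rewrite pnatr_eq0 -lt0n. Qed.

Ltac elt_field := apply: elt_ext; rewrite /= /phia /phib /phic /=; field; rewrite ?natr_neq0.

Ltac num_int := repeat first
  [ assumption | apply: int_num0 | apply: int_num1 | apply: natr_int | apply: intr_int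
  | apply: rpredD | apply: rpredB | apply: rpredM | rewrite rpredN ].

Lemma kmulA : associative kmul. Proof. by move=> *; elt_field. Qed.
Lemma kmul1g : left_id kone kmul. Proof. by move=> *; elt_field. Qed.
Lemma kmulg1 : right_id kone kmul. Proof. by move=> *; elt_field. Qed.
Lemma kmulVg : left_inverse kone kinv kmul. Proof. by move=> *; elt_field. Qed.
Lemma kmulgV : right_inverse kone kinv kmul. Proof. by move=> *; elt_field. Qed.
HB.instance Definition _ := isGroup.Build elt kmulA kmul1g kmulg1 kmulVg kmulgV.

Definition cf (c e : rat) : elt := Elt 0 0 0 c e.
Definition in_center (g : elt) : Prop := [/\ ex g = 0, ea g = 0 & eb g = 0].

Lemma in_centerE g : in_center g -> g = cf (ec g) (ef g).
Proof. by case: g => x a b c e [/= -> -> ->]. Qed.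

Lemma cf0 : cf 0 0 = 1%g.
Proof. by []. Qed.

Lemma cfM c e c' e' : (cf c e * cf c' e')%g = cf (c + c') (e + e').
Proof. by elt_field. Qed.

Lemma cf_central c e : central (cf c e).
Proof. by move=> h; rewrite /commute; elt_field. Qed.

Lemma in_center_central g : in_center g -> central g.
Proof. by move/in_centerE->; apply: cf_central. Qed.

Lemma in_centerM g h : in_center g -> in_center h -> in_center (g * h)%g.
Proof. by move=> /in_centerE-> /in_centerE->; rewrite cfM. Qed.

Lemma in_centerV g : in_center g -> in_center g^-1%g.
Proof. by move/in_centerE->; rewrite /in_center /= /phia /phib /phic /= !mul0r !oppr0. Qed.

Lemma in_center_cancel x y z : in_center x -> in_center z -> (x * y * z)%g = 1%g ->
  in_center y.
Proof.
move=> xc zc xyz1; have -> : y = (x^-1 * (x * y * z) * z^-1)%g by rewrite !mulgA mulVg mul1g mulgK.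
by rewrite xyz1 mulg1; apply: in_centerM; apply: in_centerV.
Qed.

Lemma group_cf_int H c e k : subgroup H -> H (cf c e) -> k \is a Num.int ->
  H (cf (k * c) (k * e)).
Proof.
move=> sH Hce; apply: (group_morph_int (phi := fun r => cf (r * c) (r * e))) => //.
  by move=> r s; rewrite cfM !mulrDl.
by rewrite !mul1r.
Qed.

Lemma group_cf_lattice H (n : nat) c : (0 < n)%N -> subgroup H -> H (cf n%:R^-1 0) ->
  n%:R * c \is a Num.int -> H (cf c 0).
Proof.
move=> n_gt0 sH Hn /(group_cf_int sH Hn).
by rewrite mulr0 mulrAC divff ?mul1r ?natr_neq0.
Qed.

Lemma trivial_meet_cf A B r r' : subgroup A -> subgroup B ->
  (forall x, A x -> B x -> x = 1%g) -> A (cf r 0) -> B (cf r' 0) -> r' != 0 -> r = 0.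
Proof.
move=> sA sB AB1 Ar Br' r'_neq0; pose x := r / r'.
have Ax := group_cf_int sA Ar (intr_int _ (denq x)).
have Bx := group_cf_int sB Br' (intr_int _ (numq x)).
have e : (denq x)%:~R * r = (numq x)%:~R * r' by rewrite numqE /x mulrAC divfK // mulrC.
have Bx' : B (cf ((denq x)%:~R * r) ((denq x)%:~R * 0)) by rewrite mulr0 e -(mulr0 (numq x)%:~R).
have /(congr1 ec)/= /eqP := AB1 _ Ax Bx'.
by rewrite mulf_eq0 intr_eq0 (negbTE (denq_neq0 x)) => /eqP.
Qed.

Lemma commg_t z : ex z = 0 -> [~ z, gt]%g = Elt 0 0 (ea z) (eb z) 0.
Proof. by case: z => x a b c e /= ->; elt_field. Qed.

Lemma commg_t_cf z : ex z = 0 -> ea z = 0 -> [~ z, gt]%g = cf (eb z) 0.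
Proof. by move=> z_x z_a; rewrite commg_t // z_a. Qed.

Lemma commg_a z : let w := [~ z, ga]%g in [/\ ex w = 0, ea w = 0 & eb w = - ex z].
Proof. by case: z => x a b c e; rewrite /= /phia /phib /phic /=; split; field. Qed.

Lemma noncentral_cf (P : elt -> Prop) z : (forall w, P w -> P [~ w, gt]%g) ->
  P [~ z, ga]%g -> P [~ z, gt]%g -> ~ in_center z -> exists2 r : rat, r != 0 & P (cf r 0).
Proof.
move=> Pt Pza Pzt z_nc.
have [z_x|z_x] := eqVneq (ex z) 0; last first.
  exists (- ex z); first by rewrite oppr_eq0.
  have [w_x w_a w_b] := commg_a z.
  by rewrite -w_b -commg_t_cf //; apply: Pt.
have [z_a|z_a] := eqVneq (ea z) 0; last first.
  by exists (ea z) => //; have := Pt _ Pzt; rewrite (commg_t z_x) commg_t_cf.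
have [z_b|z_b] := eqVneq (eb z) 0; last by exists (eb z); rewrite // -commg_t_cf.
by case: z_nc.
Qed.

Definition sroot (n : nat) : elt := Elt 0 0 n%:R^-1 0 n%:R^-1.

Lemma expg_ex0 g n : ex g = 0 ->
  (g ^+ n)%g = Elt 0 (n%:R * ea g) (n%:R * eb g) (n%:R * ec g) (n%:R * ef g).
Proof.
case: g => x a b c e /= ->; elim: n => [|n IHn]; first by elt_field.
by rewrite expgS IHn; elt_field.
Qed.

Lemma sroot_expn n : (0 < n)%N -> (sroot n ^+ n)%g = (gb * gf)%g.
Proof. by move=> n_gt0; rewrite expg_ex0 //; elt_field. Qed.

Lemma ex_expg g n : ex (g ^+ n)%g = n%:R * ex g.
Proof. by elim: n => [|n IHn]; rewrite ?mul0r // expgS /= IHn mulrSr mulrDl mul1r addrC. Qed.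

Lemma sroot_uniq n g : (0 < n)%N -> (g ^+ n)%g = (gb * gf)%g -> g = sroot n.
Proof.
move=> n_gt0 gn; have n0 := natr_neq0 n_gt0.
have g_x : ex g = 0.
  by move/(congr1 ex): gn; rewrite ex_expg /= addr0 => /eqP; rewrite mulf_eq0 (negbTE n0) => /eqP.
move: gn; rewrite expg_ex0 // => gn.
have := congr1 ea gn; have := congr1 eb gn; have := congr1 ec gn; have := congr1 ef gn.
rewrite /= /phia /phib /phic /= !mulr0 !addr0 !add0r => gf1 gc0 gb1 ga0.
apply: elt_ext => //=.
- by apply/eqP; move/eqP: ga0; rewrite mulf_eq0 (negbTE n0).
- by apply: (mulfI n0); rewrite gb1 mulfV.
- by apply/eqP; move/eqP: gc0; rewrite mulf_eq0 (negbTE n0).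
- by apply: (mulfI n0); rewrite gf1 mulfV.
Qed.

Lemma int_binom2 (y : rat) : y \is a Num.int -> y * (y - 1) / 2%:R \is a Num.int.
Proof.
have binom2_nat (k : nat) : k%:R * (k%:R - 1) / 2%:R \is a @Num.int rat.
  elim: k => [|k IHk]; first by rewrite !mul0r int_num0.
  have -> : k.+1%:R * (k.+1%:R - 1) / 2%:R = k%:R * (k%:R - 1) / 2%:R + k%:R :> rat.
    by rewrite -addn1 natrD; field.
  by num_int.
move/intrP=> [[k|k] ->]; first exact: binom2_nat.
have -> : (Negz k)%:~R * ((Negz k)%:~R - 1) / 2%:R = k.+2%:R * (k.+2%:R - 1) / 2%:R :> rat.
  by rewrite NegzE mulrNz -[k.+2]addn1 -addn1 !natrD; field.
exact: binom2_nat.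
Qed.

Definition Gn_integral (n : nat) (g : elt) : Prop :=
  [/\ ex g \is a Num.int, ea g \is a Num.int, eb g - ef g \is a Num.int,
      n%:R * ef g \is a Num.int & n%:R * ec g \is a Num.int].

Lemma Gn_integral_subgroup n : subgroup (Gn_integral n).
Proof.
split; first by split; rewrite /= ?mulr0 ?subr0 int_num0.
split=> [g h [gx ga gbf gf gc] [hx ha hbf hf hc] | g [gx ga gbf gf gc]];
  split; rewrite /= /phia /phib /phic; try by num_int.
- have -> : eb g + ex h * ea g + eb h - (ef g + ef h) =
            (eb g - ef g) + (eb h - ef h) + ex h * ea g by ring.
  by num_int.
- by rewrite mulrDr; num_int.
- have -> : n%:R * (ec g + ex h * eb g + ex h * (ex h - 1) / 2%:R * ea g + ec h) =
      n%:R * ec g + ex h * (n%:R * (eb g - ef g) + n%:R * ef g)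
      + ex h * (ex h - 1) / 2%:R * ea g * n%:R + n%:R * ec h by ring.
  by have := int_binom2 hx => ?; num_int.
- have -> : - (eb g + - ex g * ea g) - - ef g = - (eb g - ef g) + ex g * ea g by ring.
  by num_int.
- by rewrite mulrN; num_int.
- have -> : n%:R * - (ec g + - ex g * eb g + - ex g * (- ex g - 1) / 2%:R * ea g) =
      - (n%:R * ec g) + ex g * (n%:R * (eb g - ef g) + n%:R * ef g)
      - (- ex g) * (- ex g - 1) / 2%:R * ea g * n%:R by ring.
  have : - ex g \is a Num.int by num_int.
  by move/int_binom2 => ?; num_int.
Qed.

Lemma Ggrp_subgroup n : subgroup (Ggrp n).
Proof. exact: gen_subgroup. Qed.

Lemma Kgrp_Ggrp n x : Kgrp x -> Ggrp n x.
Proof. by move=> Kx; apply: mem_gen; left. Qed.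

Lemma Ggrp_ga {n} : Ggrp n ga. Proof. by apply: Kgrp_Ggrp; apply: mem_gen; left. Qed.
Lemma Ggrp_gt {n} : Ggrp n gt. Proof. by apply: Kgrp_Ggrp; apply: mem_gen; do 3 right; left. Qed.
Lemma Ggrp_gf {n} : Ggrp n gf. Proof. by apply: Kgrp_Ggrp; apply: mem_gen; do 4 right. Qed.

Lemma Ggrp_sroot n : (0 < n)%N -> Ggrp n (sroot n).
Proof. by move=> n_gt0; apply: mem_gen; right; rewrite (gpowE (G := elt)) sroot_expn. Qed.

Lemma sroot_Gn_integral n : (0 < n)%N -> Gn_integral n (sroot n).
Proof. by move=> n_gt0; split; rewrite /= ?subrr ?mulr0 ?mulfV ?natr_neq0 ?int_num0 ?int_num1. Qed.

Lemma Kgrp_Gn_integral n g : Kgrp g -> Gn_integral n g.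
Proof.
apply: gen_minimal; first exact: Gn_integral_subgroup.
by move=> y [->|[->|[->|[->|->]]]]; split; rewrite /= ?mulr0 ?mulr1 ?subrr ?subr0 ?sub0r ?rpredN;
  num_int.
Qed.

Lemma Ggrp_integral n g : (0 < n)%N -> Ggrp n g -> Gn_integral n g.
Proof.
move=> n_gt0; apply: gen_minimal; first exact: Gn_integral_subgroup.
move=> x [/Kgrp_Gn_integral // | xn].
have -> : x = sroot n by apply: (sroot_uniq n_gt0); rewrite -(gpowE (G := elt)).
exact: sroot_Gn_integral.
Qed.

Lemma Ggrp_center n g : (0 < n)%N -> Ggrp n g -> in_center g ->
  ef g \is a Num.int /\ n%:R * ec g \is a Num.int.
Proof.
move=> n_gt0 /(Ggrp_integral n_gt0) [_ _ gbf _ gc] [_ _ gb0].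
by move: gbf; rewrite gb0 sub0r rpredN.
Qed.

Lemma commg_a_t : [~ ga, gt]%g = gb.
Proof. by elt_field. Qed.

Lemma commg_sroot_t n : (0 < n)%N -> [~ sroot n, gt]%g = cf n%:R^-1 0.
Proof. by move=> n_gt0; elt_field. Qed.

Lemma sroot_cf_expn n c e : (0 < n)%N ->
  ((sroot n * cf c e) ^+ n * gb^-1)%g = cf (n%:R * c) (1 + n%:R * e).
Proof. by move=> n_gt0; rewrite expg_ex0 //; elt_field. Qed.

Lemma one_plus_natr_mul_neq0 (n : nat) (k : rat) : (1 < n)%N -> k \is a Num.int ->
  1 + n%:R * k != 0.
Proof.
move=> n_gt1 /intrP[m ->]; apply/eqP => /eqP.
rewrite pmulrn -intrM -[1]/(1%:~R) -intrD intr_eq0 addrC addr_eq0 => /eqP/(congr1 absz).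
by rewrite abszN abszM /= => /eqP; rewrite muln_eq1 => /andP[/eqP n1]; rewrite n1 in n_gt1.
Qed.

Lemma commg_closed_cf (X A : elt -> Prop) : commg_closed X A -> X ga -> X gt ->
  forall z, A z -> ~ in_center z -> exists2 r : rat, r != 0 & A (cf r 0).
Proof.
move=> clA Xa Xt z Az.
by apply: noncentral_cf (clA z _ Az Xa) (clA z _ Az Xt) => w Aw; apply: clA.
Qed.

Lemma Gn_factor_cf n (A B : elt -> Prop) z : direct (Ggrp n) A B ->
  A z -> ~ in_center z -> exists2 r : rat, r != 0 & A (cf r 0).
Proof.
by move=> dAB; apply: (commg_closed_cf (direct_commg dAB)); [apply: Ggrp_ga | apply: Ggrp_gt].
Qed.

Section GnFactors.
Variables (n : nat) (A B : elt -> Prop).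
Hypotheses (n_gt1 : (1 < n)%N) (dAB : direct (Ggrp n) A B).
Let n_gt0 : (0 < n)%N := ltnW n_gt1.

Lemma Gn_factor_central z : A z -> ~ in_center z -> forall y, B y -> in_center y.
Proof.
move=> Az z_nc y By; apply: NNPP => y_nc.
have [sA [sB [_ [_ [AB1 _]]]]] := dAB.
have [r r_neq0 Ar] := Gn_factor_cf dAB Az z_nc.
have [r' r'_neq0 Br'] := Gn_factor_cf (direct_sym dAB) By y_nc.
by move: r_neq0; rewrite (trivial_meet_cf sA sB AB1 Ar Br' r'_neq0) eqxx.
Qed.

Lemma Gn_central_complement_elements : (forall y, B y -> in_center y) ->
  A (cf n%:R^-1 0) /\ exists c e,
    [/\ n%:R * c \is a Num.int, e \is a Num.int & A (cf (n%:R * c) (1 + n%:R * e))].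
Proof.
move=> Bc; have [sA [_ [_ [BG [_ [_ dG]]]]]] := dAB.
have meets g : Ggrp n g -> exists z, [/\ in_center z, Ggrp n z & A (g * z)%g].
  move=> /dG[x [y [Ax [By ->]]]]; exists y^-1%g; rewrite mulgK; split=> //.
    exact/in_centerV/Bc.
  by apply: groupV (Ggrp_subgroup n) _; apply: BG.
have Acomm g h : Ggrp n g -> Ggrp n h -> A [~ g, h]%g.
  move=> /meets[z [zc _ Agz]] /meets[z' [z'c _ Ahz']].
  exact: groupR_central sA (in_center_central zc) (in_center_central z'c) Agz Ahz'.
have Ab : A gb by rewrite -commg_a_t; apply: Acomm; [apply: Ggrp_ga | apply: Ggrp_gt].
split; first by rewrite -commg_sroot_t //; apply: Acomm; [apply: Ggrp_sroot | apply: Ggrp_gt].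
have [z [zc zG Asz]] := meets _ (Ggrp_sroot n_gt0).
have [e_int nc_int] := Ggrp_center n_gt0 zG zc.
exists (ec z), (ef z); rewrite -sroot_cf_expn // -(in_centerE zc); split=> //.
exact: groupM sA (groupX _ sA Asz) (groupV sA Ab).
Qed.

Lemma Gn_central_factor_trivial : (forall y, B y -> in_center y) -> trivial B.
Proof.
move=> Bc b0 Bb0; have [sA [sB [_ [BG [AB1 _]]]]] := dAB.
have [Ac [c [e [nc_int e_int Aw]]]] := Gn_central_complement_elements Bc.
have [f_int nv_int] := Ggrp_center n_gt0 (BG _ Bb0) (Bc _ Bb0).
move: (ec b0) (ef b0) (in_centerE (Bc _ Bb0)) f_int nv_int => v f b0E f_int nv_int; subst b0.
(* b0^K = w^f c^(K v - f n c) with w = c^(n c) f^K, and n (K v - f n c) is an integer *)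
set K := 1 + n%:R * e; have K_neq0 : K != 0 by apply: one_plus_natr_mul_neq0.
have BK : B (cf (K * v) (K * f)) by apply: group_cf_int sB Bb0 _; rewrite /K; num_int.
have AK : A (cf (K * v) (K * f)).
  have -> : cf (K * v) (K * f) =
      (cf (f * (n%:R * c)) (f * (1 + n%:R * e)) * cf (K * v - f * (n%:R * c)) 0)%g.
    by rewrite cfM /K; congr cf; ring.
  apply: groupM sA (group_cf_int sA Aw f_int) (group_cf_lattice n_gt0 sA Ac _).
  have -> : n%:R * (K * v - f * (n%:R * c)) = K * (n%:R * v) - f * n%:R * (n%:R * c) by ring.
  by rewrite /K; num_int.
have := AB1 _ AK BK; rewrite -cf0 => /(congr1 (fun g => (ec g, ef g))) [/eqP Kv /eqP Kf].
by move: Kv Kf; rewrite !mulf_eq0 (negbTE K_neq0) /= => /eqP-> /eqP->.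
Qed.

End GnFactors.

Lemma Ggrp_nonabelian n : ~ abelian_set kmul (Ggrp n).
Proof.
move=> Gab; have /(congr1 eb)/eqP := Gab _ _ Ggrp_ga Ggrp_gt.
by rewrite /= /phib /= !(mulr1, mulr0, addr0, add0r) oner_eq0.
Qed.

Lemma Ggrp_indecomposable n : (1 < n)%N -> indecomposable *%g monoid.inv 1%g (Ggrp n).
Proof.
move=> n_gt1; split.
  by move=> G1; have /(congr1 ea)/eqP := G1 _ Ggrp_ga; rewrite oner_eq0.
move=> A B dAB; have [_ [_ [_ [_ [_ [_ dG]]]]]] := dAB.
have [x [y [Ax [By txy]]]] := dG _ Ggrp_gt.
have [x_x|x_x] := eqVneq (ex x) 0.
  left; apply: (Gn_central_factor_trivial n_gt1 (direct_sym dAB)).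
  apply: (Gn_factor_central (direct_sym dAB) By) => -[y_x _ _].
  by move/(congr1 ex)/eqP: txy; rewrite /= x_x y_x addr0 oner_eq0.
right; apply: (Gn_central_factor_trivial n_gt1 dAB).
by apply: (Gn_factor_central dAB Ax) => -[x_x0]; rewrite x_x0 eqxx in x_x.
Qed.

Section PairGroup.
Variables G H : groupType.
Local Open Scope group_scope.

Definition pair_mul (x y : G * H) := (x.1 * y.1, x.2 * y.2).
Definition pair_inv (x : G * H) := (x.1^-1, x.2^-1).

Lemma pair_mulA : associative pair_mul.
Proof. by move=> x y z; rewrite /pair_mul /= !mulgA. Qed.
Lemma pair_mul1g : left_id (1, 1) pair_mul.
Proof. by case=> x y; rewrite /pair_mul /= !mul1g. Qed.
Lemma pair_mulg1 : right_id (1, 1) pair_mul.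
Proof. by case=> x y; rewrite /pair_mul /= !mulg1. Qed.
Lemma pair_mulVg : left_inverse (1, 1) pair_inv pair_mul.
Proof. by move=> x; rewrite /pair_mul /= !mulVg. Qed.
Lemma pair_mulgV : right_inverse (1, 1) pair_inv pair_mul.
Proof. by move=> x; rewrite /pair_mul /= !mulgV. Qed.

HB.instance Definition _ :=
  isGroup.Build (G * H)%type pair_mulA pair_mul1g pair_mulg1 pair_mulVg pair_mulgV.

Lemma pair_expg (x : G * H) n : x ^+ n = (x.1 ^+ n, x.2 ^+ n).
Proof. by elim: n => [|n IHn]; rewrite ?expgS ?IHn. Qed.

Lemma pair_invg (x : G * H) : x^-1 = (x.1^-1, x.2^-1).
Proof. by []. Qed.

Lemma pair_commg (x y : G * H) : [~ x, y] = ([~ x.1, y.1], [~ x.2, y.2]).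
Proof. by []. Qed.

End PairGroup.

Definition dcentral (d : elt * elt) : Prop := in_center d.1 /\ in_center d.2.
Definition dcf (c1 e1 c2 e2 : rat) : elt * elt := (cf c1 e1, cf c2 e2).
Definition dinj (i : bool) (g : elt) : elt * elt := if i then (g, 1%g) else (1%g, g).
Definition dproj (i : bool) (d : elt * elt) : elt := if i then d.1 else d.2.

Lemma dcentral_central d : dcentral d -> central d.
Proof.
by case=> /in_center_central c1 /in_center_central c2 y; congr pair; [apply: c1 | apply: c2].
Qed.

Lemma dcentralE d : dcentral d -> d = dcf (ec d.1) (ef d.1) (ec d.2) (ef d.2).
Proof. by case: d => x y [/= /in_centerE {1}-> /in_centerE {1}->]. Qed.

Lemma dcentralM d d' : dcentral d -> dcentral d' -> dcentral (d * d')%g.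
Proof. by move=> [? ?] [? ?]; split; apply: in_centerM. Qed.

Lemma dcentralV d : dcentral d -> dcentral d^-1%g.
Proof. by move=> [? ?]; split; apply: in_centerV. Qed.

Lemma dcfM c1 e1 c2 e2 c1' e1' c2' e2' :
  (dcf c1 e1 c2 e2 * dcf c1' e1' c2' e2')%g = dcf (c1 + c1') (e1 + e1') (c2 + c2') (e2 + e2').
Proof. by congr pair; apply: cfM. Qed.

Lemma dcf_eq1 c1 e1 c2 e2 : dcf c1 e1 c2 e2 = 1%g -> [/\ c1 = 0, e1 = 0, c2 = 0 & e2 = 0].
Proof. by case. Qed.

Lemma dcf_torsionfree k c1 e1 c2 e2 : k != 0 ->
  dcf (k * c1) (k * e1) (k * c2) (k * e2) = 1%g -> dcf c1 e1 c2 e2 = 1%g.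
Proof.
move=> k_neq0 /dcf_eq1[] /eqP + /eqP + /eqP + /eqP.
by rewrite !mulf_eq0 (negbTE k_neq0) /= => /eqP-> /eqP-> /eqP-> /eqP->.
Qed.

Lemma group_dcf_int H c1 e1 c2 e2 k : subgroup H -> H (dcf c1 e1 c2 e2) ->
  k \is a Num.int -> H (dcf (k * c1) (k * e1) (k * c2) (k * e2)).
Proof.
move=> sH Hd.
apply: (group_morph_int (phi := fun r => dcf (r * c1) (r * e1) (r * c2) (r * e2))) => //.
  by move=> r s; rewrite dcfM !mulrDl.
by rewrite !mul1r.
Qed.

Lemma dinjM i : {morph dinj i : x y / (x * y)%g}.
Proof. by case: i => x y; rewrite /= ?mulg1. Qed.

Lemma dinjX i g n : dinj i (g ^+ n)%g = (dinj i g ^+ n)%g.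
Proof. by case: i; rewrite pair_expg /= expg1n. Qed.

Lemma dcf_expn c1 e1 c2 e2 n :
  (dcf c1 e1 c2 e2 ^+ n)%g = dcf (n%:R * c1) (n%:R * e1) (n%:R * c2) (n%:R * e2).
Proof. by rewrite pair_expg /= !expg_ex0 //= !mulr0. Qed.

Lemma dinj_sroot_expn i n z : (0 < n)%N -> dcentral z ->
  ((dinj i (sroot n) * z) ^+ n * (dinj i gb)^-1)%g = (dinj i gf * z ^+ n)%g.
Proof.
move=> n_gt0 /dcentral_central zc.
have bf : commute (dinj i gb) (dinj i gf).
  by rewrite /commute -!dinjM; congr dinj; apply/esym/(cf_central 0 1).
have bfz : commute (dinj i gb) (dinj i gf * z ^+ n).
  by apply: commuteM bf _; apply/commuteX/commute_sym.
rewrite expgMn; last exact/commute_sym.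
by rewrite -dinjX sroot_expn // dinjM -(mulgA (dinj i gb)) bfz mulgK.
Qed.

Lemma dinj_subgroup i F : subgroup F -> subgroup (fun g => F (dinj i g)).
Proof.
move=> sF; split; first by case: i; exact: (group1 sF).
split=> [x y Fx Fy | x Fx]; first by rewrite dinjM; exact: groupM sF Fx Fy.
by move: Fx => /(groupV sF); case: i; rewrite pair_invg /= invg1.
Qed.

Lemma commg_dinj i d g : [~ d, dinj i g]%g = dinj i [~ dproj i d, g]%g.
Proof. by case: i; rewrite pair_commg /= commg1. Qed.

Lemma dinjK i : cancel (dinj i) (dproj i).
Proof. by case: i. Qed.

Lemma tgenE : tgen = dcf 0 1 0 (-1).
Proof. by rewrite /tgen /dcf /cf /gf /kinv /= /phia /phib /phic !oppr0. Qed.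

Lemma Tgrp_subgroup : subgroup Tgrp.
Proof. exact: gen_subgroup. Qed.

Lemma Tgrp_tgen : Tgrp tgen.
Proof. exact: mem_gen. Qed.

Lemma Tgrp_coords d : Tgrp d -> exists2 k, k \is a Num.int & d = dcf 0 k 0 (- k).
Proof.
pose L d := exists2 k, k \is a Num.int & d = dcf 0 k 0 (- k).
apply: (gen_minimal (H := L)) => [|_ ->]; last by exists 1; rewrite ?int_num1 ?tgenE.
split; first by exists 0; rewrite ?int_num0 ?oppr0.
split=> [_ _ [k k_int ->] [l l_int ->] | _ [k k_int ->]].
  by exists (k + l); rewrite ?rpredD // dcfM !addr0 opprD.
by exists (- k); rewrite ?rpredN // pair_invg /= /dcf /cf /= /phia /phib /phic !mul0r !oppr0.
Qed.

Lemma Tgrp_dcentral d : Tgrp d -> dcentral d.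
Proof. by case/Tgrp_coords=> k _ ->. Qed.

Lemma Tgrp_int k : k \is a Num.int -> Tgrp (dcf 0 k 0 (- k)).
Proof.
move=> k_int; have := Tgrp_tgen; rewrite tgenE => /(group_dcf_int Tgrp_subgroup)/(_ k_int).
by rewrite !mulr0 mulr1 mulrN1.
Qed.

Lemma tgen_expn n : (tgen ^+ n)%g = dcf 0 n%:R 0 (- n%:R).
Proof. by rewrite tgenE pair_expg /= !expg_ex0 //= !mulr0 mulr1 mulrN1. Qed.

Lemma tgen_expn_neq1 n : (0 < n)%N -> (tgen ^+ n)%g <> 1%g.
Proof.
by move=> n_gt0; rewrite tgen_expn => /dcf_eq1[_ /eqP]; rewrite (negbTE (natr_neq0 n_gt0)).
Qed.

Lemma Tgrp_indecomposable : indecomposable *%g monoid.inv 1%g Tgrp.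
Proof.
split=> [T1 | A B [sA [sB [AT [BT [AB1 _]]]]]].
  by have /(congr1 (fun d => ef d.1))/eqP := T1 _ Tgrp_tgen; rewrite tgenE oner_eq0.
have [A1 | /(@not_trivial _ _ A)[a Aa a_neq1]] := classic (trivial A); [by left | right].
move=> b Bb; have [k k_int aE] := Tgrp_coords (AT _ Aa); have [l l_int bE] := Tgrp_coords (BT _ Bb).
have k_neq0 : k != 0 by apply/eqP => k0; apply: a_neq1; rewrite aE k0 oppr0.
suff /eqP l0 : l == 0 by rewrite bE l0 oppr0.
move: Aa Bb; rewrite aE bE => Aa Bb.
have Akl : A (dcf 0 (l * k) 0 (l * - k)) by rewrite -(mulr0 l); apply: group_dcf_int.
have Bkl : B (dcf 0 (l * k) 0 (l * - k)).
  have -> : dcf 0 (l * k) 0 (l * - k) = dcf (k * 0) (k * l) (k * 0) (k * - l) by congr dcf; ring.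
  exact: group_dcf_int.
have /(congr1 (fun d => ef d.1))/= /eqP := AB1 _ Akl Bkl.
by rewrite mulf_eq0 (negbTE k_neq0) orbF.
Qed.

Lemma dprojM i : {morph dproj i : x y / (x * y)%g}.
Proof. by case: i. Qed.

Lemma dcentralP d : dcentral d <-> forall i, in_center (dproj i d).
Proof. by split=> [[? ?] [] // | dc]; split; [apply: (dc true) | apply: (dc false)]. Qed.

Lemma dinjR i x y : dinj i [~ x, y]%g = [~ dinj i x, dinj i y]%g.
Proof. by rewrite commg_dinj dinjK. Qed.

Section DirectProductD.
Variables p q : nat.
Hypotheses (p_gt0 : (0 < p)%N) (q_gt0 : (0 < q)%N).

Definition deg (i : bool) := if i then p else q.

Lemma deg_gt0 i : (0 < deg i)%N.
Proof. by case: i. Qed.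

Lemma Dgrp_subgroup : subgroup (Dgrp p q).
Proof.
have [sGp sGq] := (Ggrp_subgroup p, Ggrp_subgroup q).
split; first by split; apply: group1.
split=> [x y [x1 x2] [y1 y2] | x [x1 x2]]; split.
- exact: groupM sGp x1 y1.
- exact: groupM sGq x2 y2.
- exact: groupV sGp x1.
- exact: groupV sGq x2.
Qed.

Lemma Dgrp_dinj i g : Ggrp (deg i) g -> Dgrp p q (dinj i g).
Proof. by case: i => Gg; split=> //; exact: group1 (Ggrp_subgroup _). Qed.

Lemma Dgrp_dcentral z : Dgrp p q z -> dcentral z ->
  exists c1 e1 c2 e2, [/\ z = dcf c1 e1 c2 e2, p%:R * c1 \is a Num.int,
    e1 \is a Num.int, q%:R * c2 \is a Num.int & e2 \is a Num.int].
Proof.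
move=> [Gz1 Gz2] zc; have [zc1 zc2] := zc.
have [e1_int c1_int] := Ggrp_center p_gt0 Gz1 zc1.
have [e2_int c2_int] := Ggrp_center q_gt0 Gz2 zc2.
by exists (ec z.1), (ef z.1), (ec z.2), (ef z.2); split; rewrite -?dcentralE.
Qed.

Lemma group_dcf_lattice H c1 c2 : subgroup H -> H (dcf p%:R^-1 0 0 0) -> H (dcf 0 0 q%:R^-1 0) ->
  p%:R * c1 \is a Num.int -> q%:R * c2 \is a Num.int -> H (dcf c1 0 c2 0).
Proof.
move=> sH Hp Hq c1_int c2_int.
have -> : dcf c1 0 c2 0 = (dcf c1 0 0 0 * dcf 0 0 c2 0)%g by rewrite dcfM !addr0 add0r.
apply: (groupM sH).
- exact: (group_cf_lattice p_gt0 (dinj_subgroup true sH) Hp).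
- exact: (group_cf_lattice q_gt0 (dinj_subgroup false sH) Hq).
Qed.

Lemma Tgrp_Dgrp d : Tgrp d -> Dgrp p q d.
Proof.
apply: gen_minimal => [|_ ->]; first exact: Dgrp_subgroup.
by split; [apply: Ggrp_gf | apply: groupV (Ggrp_subgroup q) Ggrp_gf].
Qed.

Section TCoordinate.
Variables u v : rat.
Hypotheses (u_int : u \is a Num.int) (v_int : v \is a Num.int).
Hypothesis uv1 : u * p%:R + v * q%:R = 1.

Definition tcoord (d : elt * elt) : rat := u * p%:R * ef d.1 - v * q%:R * ef d.2.

Lemma tcoordM d d' : tcoord (d * d')%g = tcoord d + tcoord d'.
Proof. by rewrite /tcoord /=; ring. Qed.

Lemma tcoordV d : tcoord d^-1%g = - tcoord d.
Proof. by rewrite /tcoord /=; ring. Qed.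

Lemma tcoord_T k : tcoord (dcf 0 k 0 (- k)) = k.
Proof.
rewrite /tcoord /=; transitivity (k * (u * p%:R + v * q%:R)); first by ring.
by rewrite uv1 mulr1.
Qed.

Lemma tcoord_int d : Dgrp p q d -> tcoord d \is a Num.int.
Proof.
move=> [/(Ggrp_integral p_gt0)[_ _ _ e1_int _] /(Ggrp_integral q_gt0)[_ _ _ e2_int _]].
by rewrite /tcoord -!mulrA; num_int.
Qed.

Definition tkernel (d : elt * elt) : Prop := Dgrp p q d /\ tcoord d = 0.

Lemma tkernel_subgroup : subgroup tkernel.
Proof.
have sD := Dgrp_subgroup.
split; first by split; [apply: group1 | rewrite /tcoord /= !mulr0 subrr].
split=> [d d' [Dd td] [Dd' td'] | d [Dd td]]; split.
- exact: groupM sD Dd Dd'.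
- by rewrite tcoordM td td' addr0.
- exact: groupV sD Dd.
- by rewrite tcoordV td oppr0.
Qed.

Lemma tkernel_direct : direct (Dgrp p q) tkernel Tgrp.
Proof.
split; first exact: tkernel_subgroup.
split; first exact: Tgrp_subgroup.
split; first by move=> d [].
split; first exact: Tgrp_Dgrp.
split; first by move=> d [_ td] /Tgrp_coords[k _ dE]; move: td; rewrite dE tcoord_T => ->.
split; first by move=> d t _ /Tgrp_dcentral/dcentral_central ct; apply/esym/ct.
move=> g Dg; set k := tcoord g.
have Tk : Tgrp (dcf 0 k 0 (- k)) by apply: Tgrp_int; apply: tcoord_int.
exists (g * (dcf 0 k 0 (- k))^-1)%g, (dcf 0 k 0 (- k)); rewrite mulgVK; split=> //; split.
  exact: groupM Dgrp_subgroup Dg (groupV Dgrp_subgroup (Tgrp_Dgrp Tk)).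
by rewrite tcoordM tcoordV tcoord_T subrr.
Qed.

End TCoordinate.

Lemma exists_complement : coprime p q -> exists S, direct (Dgrp p q) S Tgrp.
Proof.
move=> /eqP pq1; have [u [v uv]] := Bezoutz p q.
exists (tkernel u%:~R v%:~R); apply: tkernel_direct; rewrite ?intr_int //.
have := congr1 (fun z : int => z%:~R : rat) uv.
by rewrite /gcdz /= pq1 intrD !intrM /= -!pmulrn.
Qed.

End DirectProductD.

Section ComplementFactor.
Variables (p q : nat) (S A B : elt * elt -> Prop).
Hypotheses (p_gt0 : (0 < p)%N) (q_gt0 : (0 < q)%N).
Hypotheses (dS : direct (Dgrp p q) S Tgrp) (dAB : direct S A B).

Let sA : subgroup A. Proof. by case: dAB. Qed.
Let AS a : A a -> S a. Proof. by case: dAB => _ [_ [AS _]]; apply: AS. Qed.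
Let BS b : B b -> S b. Proof. by case: dAB => _ [_ [_ [BS _]]]; apply: BS. Qed.
Let SD s : S s -> Dgrp p q s. Proof. by case: dS => _ [_ [SD _]]; apply: SD. Qed.

Lemma complement_decomp g : Dgrp p q g ->
  exists a b t, [/\ A a, B b, Tgrp t & g = (a * b * t)%g].
Proof.
case: dS => _ [_ [_ [_ [_ [_ dD]]]]] /dD[s [t [Ss [Tt ->]]]].
case: dAB => _ [_ [_ [_ [_ [_ dS']]]]]; have [a [b [Aa [Bb ->]]]] := dS' _ Ss.
by exists a, b, t.
Qed.

Lemma complement_uniq a1 b1 t1 a2 b2 t2 : A a1 -> B b1 -> Tgrp t1 ->
  A a2 -> B b2 -> Tgrp t2 -> (a1 * b1 * t1 = a2 * b2 * t2)%g ->
  [/\ a1 = a2, b1 = b2 & t1 = t2].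
Proof.
move=> Aa1 Bb1 Tt1 Aa2 Bb2 Tt2 e.
have sS : subgroup S by case: dS.
have [e12 ->] := direct_uniq dS (groupM sS (AS Aa1) (BS Bb1)) Tt1
  (groupM sS (AS Aa2) (BS Bb2)) Tt2 e.
by have [-> ->] := direct_uniq dAB Aa1 Bb1 Aa2 Bb2 e12.
Qed.

Lemma factor_commg_closed : commg_closed (Dgrp p q) A.
Proof. exact: direct_commg_closed_lift dS AS (direct_commg dAB). Qed.

Lemma factor_dinj_cf i z : A z -> ~ in_center (dproj i z) ->
  exists2 r : rat, r != 0 & A (dinj i (cf r 0)).
Proof.
move=> Az; have clA := factor_commg_closed.
have DX x : Ggrp (deg p q i) x -> Dgrp p q (dinj i x) by apply: Dgrp_dinj.
apply: (noncentral_cf (P := fun w => A (dinj i w))).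
- move=> w Aw; have := clA _ _ Aw (DX _ Ggrp_gt).
  by rewrite commg_dinj dinjK.
- by rewrite -commg_dinj; apply: clA Az (DX _ Ggrp_ga).
- by rewrite -commg_dinj; apply: clA Az (DX _ Ggrp_gt).
Qed.

Definition meets_center_coset (F : elt * elt -> Prop) g :=
  exists z, [/\ dcentral z, Dgrp p q z & F (g * z)%g].

Definition covers (F : elt * elt -> Prop) i :=
  forall x, Ggrp (deg p q i) x -> meets_center_coset F (dinj i x).

Lemma factor_meets_coset g : Dgrp p q g ->
  (forall a b t, A a -> B b -> Tgrp t -> g = (a * b * t)%g -> dcentral b) ->
  meets_center_coset A g.
Proof.
move=> Dg bc; have [a [b [t [Aa Bb Tt gE]]]] := complement_decomp Dg.
have sD := Dgrp_subgroup p q.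
exists (b * t)^-1%g; split.
- by apply/dcentralV/dcentralM; [apply: (bc a b t) | apply: Tgrp_dcentral].
- exact: groupV sD (groupM sD (SD (BS Bb)) (Tgrp_Dgrp p q Tt)).
- by rewrite gE -(mulgA a) mulgK.
Qed.

Lemma central_complement_covers i : (forall b, B b -> dcentral b) -> covers A i.
Proof.
by move=> Bc x Gx; apply: factor_meets_coset (Dgrp_dinj Gx) _ => a b t _ Bb _ _; apply: Bc.
Qed.

Lemma crossed_covers i : (forall b, B b -> in_center (dproj i b)) ->
  (forall a, A a -> in_center (dproj (~~ i) a)) -> covers A i.
Proof.
move=> Bi Ai x Gx; apply: factor_meets_coset (Dgrp_dinj Gx) _ => a b t Aa Bb Tt e.
have bi' : in_center (dproj (~~ i) b).
  apply: (in_center_cancel (Ai _ Aa) (proj1 (dcentralP t) (Tgrp_dcentral Tt) (~~ i))).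
  by rewrite -!dprojM -e; case: i {Bi Ai Gx e}.
by apply/dcentralP; case: i Bi bi' {Ai Gx e} => Bi bi' [] //; apply: Bi.
Qed.

Lemma covers_commg i x y : covers A i -> Ggrp (deg p q i) x -> Ggrp (deg p q i) y ->
  A (dinj i [~ x, y]%g).
Proof.
move=> covA /covA[z [zc _ Axz]] /covA[z' [z'c _ Ayz']]; rewrite dinjR.
exact: groupR_central sA (dcentral_central zc) (dcentral_central z'c) Axz Ayz'.
Qed.

Lemma covers_lattice i : covers A i -> A (dinj i (cf (deg p q i)%:R^-1 0)).
Proof.
move=> covA; rewrite -(@commg_sroot_t (deg p q i)) ?deg_gt0 //.
by apply: covers_commg; [|apply: Ggrp_sroot; apply: deg_gt0 | apply: Ggrp_gt].
Qed.

Lemma covers_f i : covers A i -> exists c1 e1 c2 e2,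
  [/\ p%:R * c1 \is a Num.int, e1 \is a Num.int, q%:R * c2 \is a Num.int, e2 \is a Num.int
    & A (dinj i gf * dcf c1 e1 c2 e2 ^+ deg p q i)%g].
Proof.
move=> covA; have Ab : A (dinj i gb).
  by rewrite -commg_a_t; apply: covers_commg; [|apply: Ggrp_ga | apply: Ggrp_gt].
have [z [zc Dz Asz]] := covA _ (Ggrp_sroot (deg_gt0 p_gt0 q_gt0 i)).
have [c1 [e1 [c2 [e2 [zE c1_int e1_int c2_int e2_int]]]]] := Dgrp_dcentral p_gt0 q_gt0 Dz zc.
exists c1, e1, c2, e2; split=> //.
rewrite -zE -dinj_sroot_expn ?deg_gt0 //.
exact: groupM sA (groupX _ sA Asz) (groupV sA Ab).
Qed.

End ComplementFactor.

Definition dominates (F : elt * elt -> Prop) i := exists2 z, F z & ~ in_center (dproj i z).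

Lemma not_dominates F i : ~ dominates F i -> forall z, F z -> in_center (dproj i z).
Proof. by move=> F_nd z Fz; apply: NNPP => z_nc; apply: F_nd; exists z. Qed.

Section ComplementIndecomposable.
Variables (p q : nat) (S A B : elt * elt -> Prop).
Hypotheses (p_gt1 : (1 < p)%N) (q_gt1 : (1 < q)%N).
Hypotheses (dS : direct (Dgrp p q) S Tgrp) (dAB : direct S A B).
Let p_gt0 : (0 < p)%N := ltnW p_gt1.
Let q_gt0 : (0 < q)%N := ltnW q_gt1.

Lemma central_factor_trivial : (forall y, B y -> dcentral y) -> trivial B.
Proof.
move=> Bc b0 Bb0; have [sA [sB [_ [BS _]]]] := dAB.
have covA i : covers p q A i by apply: (central_complement_covers dS dAB).
have [c1 [e1 [c2 [e2 [c1_int e1_int c2_int e2_int Aw]]]]] := covers_f p_gt0 q_gt0 dAB (covA true).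
rewrite dcf_expn -[dinj true gf]/(dcf 0 1 0 0) dcfM !add0r in Aw.
have Db0 : Dgrp p q b0 by case: dS => _ [_ [SD _]]; apply/SD/BS.
have [v1 [f1 [v2 [f2 [b0E v1_int f1_int v2_int f2_int]]]]] :=
  Dgrp_dcentral p_gt0 q_gt0 Db0 (Bc _ Bb0).
subst b0.
(* Cramer's rule: K (f1, f2) = al (1 + p e1, p e2) + be (1, -1) *)
set K := 1 + p%:R * (e1 + e2); set al := f1 + f2.
set be := p%:R * e2 * f1 - (1 + p%:R * e1) * f2.
set g1 := K * v1 - al * (p%:R * c1); set g2 := K * v2 - al * (p%:R * c2).
apply: (dcf_torsionfree (k := K)); first by apply: one_plus_natr_mul_neq0; num_int.
have BK : B (dcf (K * v1) (K * f1) (K * v2) (K * f2)).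
  by apply: (group_dcf_int sB Bb0); rewrite /K; num_int.
have Ag : A (dcf g1 0 g2 0).
  apply: (group_dcf_lattice p_gt0 q_gt0 sA (covers_lattice p_gt0 q_gt0 dAB (covA true))
                                           (covers_lattice p_gt0 q_gt0 dAB (covA false))).
  - have -> : p%:R * g1 = K * (p%:R * v1) - al * p%:R * (p%:R * c1) by rewrite /g1; ring.
    by rewrite /K /al; num_int.
  - have -> : q%:R * g2 = K * (q%:R * v2) - al * p%:R * (q%:R * c2) by rewrite /g2; ring.
    by rewrite /K /al; num_int.
have al_int : al \is a Num.int by rewrite /al; num_int.
have be_int : be \is a Num.int by rewrite /be; num_int.
have AK := groupM sA (group_dcf_int sA Aw al_int) Ag; rewrite dcfM in AK.
have := complement_uniq dS dAB (group1 sA) BK (group1 Tgrp_subgroup)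
  AK (group1 sB) (Tgrp_int be_int).
case; last by move=> _ ->.
by rewrite mulg1 mul1g mulg1 dcfM; congr dcf; rewrite /g1 /g2 /be /K /al; ring.
Qed.

Lemma crossed_factors_false : (forall y, B y -> in_center y.1) ->
  (forall x, A x -> in_center x.2) -> False.
Proof.
move=> B1 A2; have [sA [sB _]] := dAB.
have covA : covers p q A true by apply: (crossed_covers dS dAB).
have covB : covers p q B false by apply: (crossed_covers dS (direct_sym dAB)).
have [c1 [e1 [c2 [e2 [c1_int e1_int c2_int e2_int Aw]]]]] := covers_f p_gt0 q_gt0 dAB covA.
have [c3 [e3 [c4 [e4 [c3_int e3_int c4_int e4_int Bw]]]]] :=
  covers_f p_gt0 q_gt0 (direct_sym dAB) covB.
rewrite dcf_expn -[dinj true gf]/(dcf 0 1 0 0) dcfM !add0r in Aw.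
rewrite dcf_expn -[dinj false gf]/(dcf 0 0 0 1) dcfM !add0r in Bw.
(* (L, M, N) is the cross product of the f-parts (1 + p e1, p e2), (q e3, 1 + q e4) and (1, -1) *)
set L := 1 + q%:R * (e3 + e4); set M := - (1 + p%:R * (e1 + e2)).
set N := p%:R * q%:R * e2 * e3 - (1 + p%:R * e1) * (1 + q%:R * e4).
set g1 := - (L * (p%:R * c1) + M * (q%:R * c3)).
set g2 := - (L * (p%:R * c2) + M * (q%:R * c4)).
have Ag : A (dcf g1 0 0 0).
  apply: (group_cf_lattice p_gt0 (dinj_subgroup true sA) (covers_lattice p_gt0 q_gt0 dAB covA)).
  have -> : p%:R * g1 = - (L * p%:R * (p%:R * c1) + M * q%:R * (p%:R * c3)) by rewrite /g1; ring.
  by rewrite /L /M; num_int.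
have Bg : B (dcf 0 0 g2 0).
  apply: (group_cf_lattice q_gt0 (dinj_subgroup false sB)
           (covers_lattice p_gt0 q_gt0 (direct_sym dAB) covB)).
  have -> : q%:R * g2 = - (L * p%:R * (q%:R * c2) + M * q%:R * (q%:R * c4)) by rewrite /g2; ring.
  by rewrite /L /M; num_int.
have [L_int M_int N_int] : [/\ L \is a Num.int, M \is a Num.int & N \is a Num.int].
  by split; rewrite /L /M /N; num_int.
have AL := groupM sA (group_dcf_int sA Aw L_int) Ag; rewrite dcfM in AL.
have BM := groupM sB (group_dcf_int sB Bw M_int) Bg; rewrite dcfM in BM.
have := complement_uniq dS dAB AL BM (Tgrp_int N_int)
  (group1 sA) (group1 sB) (group1 Tgrp_subgroup).
case=> [|/dcf_eq1[_ /eqP] + _ _ _ _].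
  rewrite !mulg1 (dcfM (L * (p%:R * c1) + g1)) dcfM.
  by congr dcf; rewrite /g1 /g2 /L /M /N; ring.
have e34_int : e3 + e4 \is a Num.int by num_int.
rewrite addr0 mulf_eq0 (negbTE (one_plus_natr_mul_neq0 p_gt1 e1_int)) orbF.
exact/negP/(one_plus_natr_mul_neq0 q_gt1 e34_int).
Qed.

Lemma dominates_unique i : dominates A i -> dominates B i -> False.
Proof.
move=> [z Az z_nc] [y By y_nc]; have [sA [sB [_ [_ [AB1 _]]]]] := dAB.
have [r r_neq0 Ar] := factor_dinj_cf dS dAB Az z_nc.
have [r' r'_neq0 Br'] := factor_dinj_cf dS (direct_sym dAB) By y_nc.
have AB1i x : A (dinj i x) -> B (dinj i x) -> x = 1%g.
  by move=> Ax Bx; rewrite -(dinjK i x) (AB1 _ Ax Bx); case: i {Ar Br' Ax Bx z_nc y_nc}.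
have := trivial_meet_cf (dinj_subgroup i sA) (dinj_subgroup i sB) AB1i Ar Br' r'_neq0.
by move/eqP; rewrite (negbTE r_neq0).
Qed.

End ComplementIndecomposable.

Lemma complement_indecomposable p q S : (1 < p)%N -> (1 < q)%N ->
  direct (Dgrp p q) S Tgrp -> indecomposable *%g monoid.inv 1%g S.
Proof.
move=> p_gt1 q_gt1 dS; split=> [S1 | A B dAB].
  have [_ [_ [_ [_ [_ [_ dD]]]]]] := dS.
  have [s [t [Ss [Tt aE]]]] := dD _ (Dgrp_dinj (i := true) (Ggrp_ga (n := p))).
  have [[_ t_a _] _] := Tgrp_dcentral Tt.
  by move/(congr1 (fun d => ea d.1))/eqP: aE; rewrite (S1 _ Ss) /= t_a oner_eq0.
have [A1|A_ntriv] := classic (trivial A); [by left | right; apply: NNPP => B_ntriv].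
have dom_some (F E : elt * elt -> Prop) : direct S E F -> ~ trivial F -> exists i, dominates F i.
  move=> dEF F_ntriv; apply: NNPP => F_nd.
  apply/F_ntriv/(central_factor_trivial p_gt1 q_gt1 dS dEF).
  by move=> y Fy; apply/dcentralP => i; apply: not_dominates Fy => Fi; apply: F_nd; exists i.
have [i Bi] := dom_some _ _ dAB B_ntriv.
have [j Aj] := dom_some _ _ (direct_sym dAB) A_ntriv.
have uniqAB k : dominates A k -> dominates B k -> False := @dominates_unique _ _ _ _ _ dS dAB k.
case: i j Bi Aj => -[] Bi Aj; try exact: uniqAB Aj Bi.
- apply: (crossed_factors_false p_gt1 q_gt1 dS (direct_sym dAB)).
  + by apply: (not_dominates (i := true)) => /uniqAB; apply.
  + by apply: (not_dominates (i := false)) => /uniqAB; apply.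
- apply: (crossed_factors_false p_gt1 q_gt1 dS dAB).
  + by apply: (not_dominates (i := true)) => /(uniqAB _ Aj).
  + by apply: (not_dominates (i := false)) => /uniqAB; apply.
Qed.

Local Close Scope ring_scope.

Theorem mainTheorem19 (p q : nat) (hp : (1 < p)%N) (hq : (1 < q)%N)
    (hpq : coprime p q) :
  (* T is an infinite cyclic direct factor of D *)
  (forall n : nat, (0 < n)%N -> gpow dmul done_ tgen n <> done_) /\
  (exists S, internal_direct dmul dinv done_ (Dgrp p q) S Tgrp) /\
  (* any complement S (S ~ D/T) is directly indecomposable *)
  (forall S, internal_direct dmul dinv done_ (Dgrp p q) S Tgrp ->
     indecomposable dmul dinv done_ S) /\
  (* G_p, G_q nonabelian and indecomposable; T ~ Z indecomposable *)
  ~ abelian_set kmul (Ggrp p) /\ ~ abelian_set kmul (Ggrp q) /\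
  indecomposable kmul kinv kone (Ggrp p) /\ indecomposable kmul kinv kone (Ggrp q) /\
  indecomposable dmul dinv done_ Tgrp.
Proof.
split; first by move=> n n_gt0; rewrite (gpowE (G := (elt * elt)%type)); apply: tgen_expn_neq1.
split; first exact: exists_complement (ltnW hp) (ltnW hq) hpq.
split; first by move=> S; apply: complement_indecomposable.
do 2 (split; first exact: Ggrp_nonabelian).
do 2 (split; first exact: Ggrp_indecomposable).
exact: Tgrp_indecomposable.
Qed.
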